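(* For any $\alpha\in(0,\frac\pi2)$ there exist constants $C_\alpha>0$ and $a_0=a_0(\alpha)>0$ such that for $u\in\mathbb{C}$ and $g=e^{i\gamma}\in\mathbb{S}^1\subset\mathbb{C}$ with $W(u,g)<a_0^2$ we may represent $u=fe^{i\psi}$ with $f\ge0$, $\psi\in\mathbb{R}$, such that $|f^2-1|\le\sqrt{2W(u,g)}<\sqrt2a_0$, and either $|\psi-\gamma-\alpha|<C_\alpha\sqrt{W(u,g)}$ or $|\psi-\gamma+\alpha|<C_\alpha\sqrt{W(u,g)}$.
   Context: $\mathbb{R}^2\simeq\mathbb{C}$ with $(u,v)=\Re[u\bar v]$; $W(u,g)=\frac12(|u|^2-1)^2+[(u,g)-\cos\alpha]^2$. *)

(* concrete reals R. The complex plane C ~ R^2 is modeled by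
   pairs of reals (x, y) <-> x + i y. *)
From Stdlib Require Import Reals.
Open Scope R_scope.

(* Euclidean inner product (u, v) = Re[u * conj v] on R^2 ~ C. *)
Definition inner (u v : R * R) : R := fst u * fst v + snd u * snd v.

Definition normsq (u : R * R) : R := fst u ^ 2 + snd u ^ 2.

Definition expi (t : R) : R * R := (cos t, sin t).

Definition W (alpha : R) (u g : R * R) : R :=
  / 2 * (normsq u - 1) ^ 2 + (inner u g - cos alpha) ^ 2.

(* Rotating by -gamma reduces to g = 1; write the rotated point as f e^{i th}
   with |th| <= pi.  The two terms of W control |f^2 - 1| and
   |f cos th - cos alpha|, hence |cos th - cos alpha| <= 3 sqrt W.  On [0, pi]
   cos separates from cos alpha at a linear rate,
   |cos t - cos alpha| >= sin(alpha/2)/3 |t - alpha|, so |th| lies within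
   9/sin(alpha/2) sqrt W of alpha, and the sign of th selects the alternative. *)

From Stdlib Require Import Reals Lra.
Open Scope R_scope.

Lemma Rabs_le_sqrt z q : z ^ 2 <= q -> Rabs z <= sqrt q.
Proof.
  intros Hz. rewrite <- sqrt_Rsqr_abs. apply sqrt_le_1_alt. unfold Rsqr. lra.
Qed.

Lemma sin_ge_third x : 0 <= x <= PI / 2 -> x / 3 <= sin x.
Proof.
  intros [Hx0 Hx1]. pose proof PI_4.
  destruct (SIN x Hx0 ltac:(lra)) as [Hlb _].
  unfold sin_lb, sin_approx, sin_term in Hlb; simpl in Hlb.
  assert (Hxx : 0 <= x * x <= 4) by nra.
  (* the Taylor lower bound x - x^3/6 + x^5/120 - x^7/5040 exceeds x/3 when x^2 <= 4 *)
  assert (Hrest : 0 <= x * (2/3 - (x*x)/6 + (x*x)*(x*x)/120 - (x*x)*(x*x)*(x*x)/5040)).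
  { apply Rmult_le_pos; [lra|]. set (s := x * x) in *. nra. }
  lra.
Qed.

Lemma Rabs_sin_ge_third x : - (PI / 2) <= x <= PI / 2 -> Rabs x / 3 <= Rabs (sin x).
Proof.
  intros Hx. destruct (Rle_dec 0 x) as [Hx0|Hx0].
  - pose proof (sin_ge_third x ltac:(lra)).
    rewrite Rabs_right, Rabs_right by lra. lra.
  - pose proof (sin_ge_third (- x) ltac:(lra)) as Hsin. rewrite sin_neg in Hsin.
    rewrite Rabs_left, Rabs_left1 by lra. lra.
Qed.

Lemma sin_half_sum_ge t a : 0 <= t <= PI -> 0 <= a <= PI / 2 ->
  sin (a / 2) <= sin ((t + a) / 2).
Proof.
  intros Ht Ha. destruct (Rle_dec ((t + a) / 2) (PI / 2)).
  - apply sin_incr_1; lra.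
  - rewrite <- (sin_PI_x ((t + a) / 2)). apply sin_incr_1; lra.
Qed.

(* cos t - cos a = -2 sin((t-a)/2) sin((t+a)/2), and both sines are bounded below *)
Lemma cos_dist_ge t a : 0 <= t <= PI -> 0 <= a <= PI / 2 ->
  sin (a / 2) / 3 * Rabs (t - a) <= Rabs (cos t - cos a).
Proof.
  intros Ht Ha. rewrite form2, !Rabs_mult.
  pose proof (sin_half_sum_ge t a Ht Ha) as Hsum.
  assert (Hsa : 0 <= sin (a / 2)) by (apply sin_ge_0; pose proof PI_RGT_0; lra).
  pose proof (Rabs_sin_ge_third ((t - a) / 2) ltac:(lra)) as Hdiff.
  rewrite (Rabs_right (sin ((t + a) / 2))), (Rabs_left (-2)) by lra.
  replace (Rabs ((t - a) / 2)) with (Rabs (t - a) / 2) in Hdiff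
    by (unfold Rdiv; rewrite Rabs_mult, (Rabs_right (/ 2)); [reflexivity | lra]).
  pose proof (Rabs_pos (t - a)).
  assert (sin (a / 2) * (Rabs (t - a) / 2 / 3)
          <= sin ((t + a) / 2) * Rabs (sin ((t - a) / 2)))
    by (apply Rmult_le_compat; lra).
  lra.
Qed.

Lemma angle_dist_le alpha th e : 0 < alpha < PI / 2 -> Rabs th <= PI ->
  Rabs (cos th - cos alpha) <= e ->
  Rabs (Rabs th - alpha) <= 3 / sin (alpha / 2) * e.
Proof.
  intros Ha Hth He.
  assert (Hsa : 0 < sin (alpha / 2)) by (apply sin_gt_0; lra).
  assert (Hcos : cos (Rabs th) = cos th).
  { destruct (Rle_dec 0 th).
    - rewrite Rabs_right by lra. reflexivity.
    - rewrite Rabs_left by lra. apply cos_neg. }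
  pose proof (cos_dist_ge (Rabs th) alpha (conj (Rabs_pos th) Hth) ltac:(lra)) as Hsep.
  rewrite Hcos in Hsep.
  apply Rmult_le_reg_l with (sin (alpha / 2) / 3); [lra|].
  replace (sin (alpha / 2) / 3 * (3 / sin (alpha / 2) * e)) with e by (field; lra).
  lra.
Qed.

Definition rot (t : R) (v : R * R) : R * R :=
  (cos t * fst v - sin t * snd v, sin t * fst v + cos t * snd v).

Lemma rot_polar t f th :
  rot t (f * cos th, f * sin th) = (f * cos (t + th), f * sin (t + th)).
Proof. unfold rot; simpl. rewrite cos_plus, sin_plus. f_equal; ring. Qed.

Lemma rotK t v : rot t (rot (- t) v) = v.
Proof.
  destruct v as [x y]. unfold rot; simpl. rewrite cos_neg, sin_neg.
  pose proof (sin2_cos2 t) as Hpyth. unfold Rsqr in Hpyth.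
  f_equal.
  - transitivity (x * (sin t * sin t + cos t * cos t)); [ring | rewrite Hpyth; ring].
  - transitivity (y * (sin t * sin t + cos t * cos t)); [ring | rewrite Hpyth; ring].
Qed.

Lemma normsq_rot t v : normsq (rot t v) = normsq v.
Proof.
  destruct v as [x y]. unfold normsq, rot; simpl.
  pose proof (sin2_cos2 t) as Hpyth. unfold Rsqr in Hpyth.
  transitivity ((x ^ 2 + y ^ 2) * (sin t * sin t + cos t * cos t));
    [ring | rewrite Hpyth; ring].
Qed.

Lemma inner_expi u t : inner u (expi t) = fst (rot (- t) u).
Proof. unfold inner, expi, rot; simpl. rewrite cos_neg, sin_neg. ring. Qed.

Lemma polar_form v : exists th, Rabs th <= PI /\
  v = (sqrt (normsq v) * cos th, sqrt (normsq v) * sin th).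
Proof.
  destruct v as [x y]. unfold normsq; cbn [fst snd].
  set (f := sqrt (x ^ 2 + y ^ 2)).
  assert (Hf0 : 0 <= f) by apply sqrt_pos.
  assert (Hff : f * f = x ^ 2 + y ^ 2) by (apply sqrt_sqrt; nra).
  pose proof PI_RGT_0.
  destruct (Req_dec f 0) as [Hf|Hf].
  { exists 0. rewrite Rabs_R0. split; [lra|].
    rewrite Hf, !Rmult_0_l. f_equal; nra. }
  set (a := x / f).
  assert (Hxa : x = f * a) by (unfold a; field; exact Hf).
  assert (Ha : -1 <= a <= 1).
  { assert (Hff1 : f * f * (a * a) <= f * f * 1) by (rewrite Hxa in Hff; nra).
    apply Rmult_le_reg_l in Hff1; [nra | nra]. }
  assert (Hcos : f * cos (acos a) = x) by (rewrite cos_acos by exact Ha; lra).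
  assert (Hsin : f * sin (acos a) = Rabs y).
  { rewrite sin_acos by exact Ha.
    assert (Hy : sqrt (1 - a²) = Rabs y / f).
    { apply sqrt_lem_1.
      - unfold Rsqr. nra.
      - pose proof (Rabs_pos y). unfold Rdiv.
        apply Rmult_le_pos; [lra | apply Rlt_le, Rinv_0_lt_compat; lra].
      - unfold Rsqr.
        replace (Rabs y / f * (Rabs y / f)) with (Rabs y * Rabs y / (f * f))
          by (field; exact Hf).
        rewrite <- Rabs_mult, Rabs_right by nra.
        replace (y * y) with (f * f * (1 - a * a)) by (rewrite Hxa in Hff; nra).
        field. exact Hf. }
    rewrite Hy. field. exact Hf. }
  pose proof (acos_bound a).
  destruct (Rle_dec 0 y).
  - exists (acos a). rewrite Rabs_right by lra. split; [lra|].
    rewrite Rabs_right in Hsin by lra. rewrite Hcos, Hsin. reflexivity.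
  - exists (- acos a). rewrite Rabs_left1 by lra. split; [lra|].
    rewrite Rabs_left in Hsin by lra. rewrite cos_neg, sin_neg, Hcos.
    f_equal. lra.
Qed.

(* cos th - c = (f cos th - c) - cos th (f - 1), and |f - 1| <= |f^2 - 1| as f >= 0 *)
Lemma cos_dist_le_sqrt f th c w : 0 <= f ->
  / 2 * (f ^ 2 - 1) ^ 2 + (f * cos th - c) ^ 2 <= w ->
  Rabs (cos th - c) <= 3 * sqrt w.
Proof.
  intros Hf Hw.
  pose proof (pow2_ge_0 (f ^ 2 - 1)). pose proof (pow2_ge_0 (f * cos th - c)).
  assert (Hmod : Rabs (f ^ 2 - 1) <= sqrt (2 * w)) by (apply Rabs_le_sqrt; lra).
  assert (Harg : Rabs (f * cos th - c) <= sqrt w) by (apply Rabs_le_sqrt; lra).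
  assert (Hf1 : Rabs (f - 1) <= Rabs (f ^ 2 - 1)).
  { replace (f ^ 2 - 1) with ((f - 1) * (f + 1)) by ring.
    rewrite Rabs_mult, (Rabs_right (f + 1)) by lra.
    pose proof (Rabs_pos (f - 1)). nra. }
  assert (Hsqrt2 : sqrt (2 * w) <= 2 * sqrt w).
  { rewrite sqrt_mult_alt by lra.
    pose proof (sqrt_sqrt 2 ltac:(lra)). pose proof (sqrt_pos 2). pose proof (sqrt_pos w).
    apply Rmult_le_compat_r; nra. }
  replace (cos th - c) with ((f * cos th - c) - cos th * (f - 1)) by ring.
  eapply Rle_trans; [apply Rabs_triang|].
  rewrite Rabs_Ropp, Rabs_mult.
  assert (Hcos : Rabs (cos th) <= 1) by (apply Rabs_le, COS_bound).
  pose proof (Rabs_pos (cos th)). pose proof (Rabs_pos (f - 1)).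
  nra.
Qed.

Theorem lemma5p1 :
  forall alpha : R, 0 < alpha < PI / 2 ->
  exists C a0 : R, 0 < C /\ 0 < a0 /\
    forall (u : R * R) (gamma : R),
      W alpha u (expi gamma) < a0 ^ 2 ->
      exists f psi : R,
        0 <= f /\
        u = (f * cos psi, f * sin psi) /\
        Rabs (f ^ 2 - 1) <= sqrt (2 * W alpha u (expi gamma)) /\
        sqrt (2 * W alpha u (expi gamma)) < sqrt 2 * a0 /\
        (Rabs (psi - gamma - alpha) <= C * sqrt (W alpha u (expi gamma)) \/
         Rabs (psi - gamma + alpha) <= C * sqrt (W alpha u (expi gamma))).
Proof.
  intros alpha Ha.
  assert (Hsa : 0 < sin (alpha / 2)) by (apply sin_gt_0; lra).
  exists (9 / sin (alpha / 2)), 1.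
  split; [apply Rdiv_lt_0_compat; lra|]. split; [lra|].
  intros u gamma HW.
  set (w := W alpha u (expi gamma)) in *.
  destruct (polar_form (rot (- gamma) u)) as [th [Hth Hv]].
  rewrite normsq_rot in Hv. set (f := sqrt (normsq u)) in Hv.
  assert (Hf0 : 0 <= f) by apply sqrt_pos.
  assert (Hw : w = / 2 * (f ^ 2 - 1) ^ 2 + (f * cos th - cos alpha) ^ 2).
  { unfold w, W. rewrite inner_expi, Hv. unfold f.
    rewrite pow2_sqrt by (unfold normsq; nra). reflexivity. }
  pose proof (pow2_ge_0 (f ^ 2 - 1)). pose proof (pow2_ge_0 (f * cos th - cos alpha)).
  exists f, (gamma + th). repeat split.
  - exact Hf0.
  - rewrite <- (rotK gamma u), Hv. apply rot_polar.
  - apply Rabs_le_sqrt. lra.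
  - rewrite Rmult_1_r. apply sqrt_lt_1_alt. lra.
  - pose proof (angle_dist_le alpha th (3 * sqrt w) Ha Hth
      (cos_dist_le_sqrt f th (cos alpha) w Hf0 ltac:(lra))) as Hangle.
    replace (3 / sin (alpha / 2) * (3 * sqrt w)) with (9 / sin (alpha / 2) * sqrt w)
      in Hangle by (field; lra).
    destruct (Rle_dec 0 th).
    + left. rewrite (Rabs_right th) in Hangle by lra.
      replace (gamma + th - gamma - alpha) with (th - alpha) by ring. exact Hangle.
    + right. rewrite (Rabs_left th) in Hangle by lra.
      replace (gamma + th - gamma + alpha) with (- (- th - alpha)) by ring.
      rewrite Rabs_Ropp. exact Hangle.
Qed.
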